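(* Let $G$ be a connected graph on $n$ vertices with independence number $\beta$. Then $$ABC(G)\leq \beta(n-\beta)\sqrt{\frac{2n-\beta-3}{(n-\beta)(n-1)}}+\frac{(n-\beta)(n-\beta-1)}{2}\sqrt{\frac{2n-4}{(n-1)(n-1)}},$$ with equality if and only if $G\cong \overline{K_{\beta}}\vee K_{n-\beta}$.
   Context: For a simple graph $G$, $ABC(G)=\sum_{uv\in E(G)}\sqrt{\frac{d(u)+d(v)-2}{d(u)d(v)}}$, where $d(u)$ is the degree of $u$. The independence number is the size of a largest set of pairwise nonadjacent vertices. $\overline{K_\beta}$ is the edgeless graph on $\beta$ vertices, $K_r$ the complete graph on $r$ vertices, and $G\vee H$ (join) is the graph on $V(G)\cup V(H)$ (disjoint) with edge set $E(G)\cup E(H)\cup\{xy: x\in V(G), y\in V(H)\}$. *)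

From mathcomp Require Import all_boot all_order all_algebra.
From mathcomp Require Import reals.
Set Implicit Arguments. Unset Strict Implicit. Unset Printing Implicit Defensive.
Import Order.TTheory GRing.Theory Num.Theory.

Definition simple_graph (T : finType) (e : rel T) : Prop :=
  symmetric e /\ irreflexive e.

Definition connected_graph (T : finType) (e : rel T) : Prop :=
  forall x y : T, connect e x y.

Definition deg (T : finType) (e : rel T) (x : T) : nat := #|[set y | e x y]|.

Definition independent (T : finType) (e : rel T) (S : {set T}) : bool :=
  [forall x in S, forall y in S, ~~ e x y].

Definition indep_num (T : finType) (e : rel T) : nat :=
  \max_(S : {set T} | independent e S) #|S|.

Local Open Scope ring_scope.

(* ABC index: sum over edges uv; each unordered edge is counted twice in
   the ordered double sum, hence the factor 1/2. *)
Definition ABC (R : realType) (T : finType) (e : rel T) : R :=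
  2^-1 * \sum_(x : T) \sum_(y : T | e x y)
    Num.sqrt (((deg e x)%:R + (deg e y)%:R - 2) / ((deg e x)%:R * (deg e y)%:R)).

(* Adjacency of  complement(K_b) \/ K_(n-b)  on vertex set 'I_n:
   vertices i < b form the independent part, the rest a clique,
   and every vertex of one part is joined to every vertex of the other. *)
Definition join_empty_complete (n b : nat) : rel 'I_n :=
  fun i j => (i != j) && ~~ (((i : nat) < b)%N && ((j : nat) < b)%N).
Arguments join_empty_complete : clear implicits.

Definition graph_iso (T1 T2 : finType) (e1 : rel T1) (e2 : rel T2) : Prop :=
  exists f : T1 -> T2, bijective f /\ forall x y, e2 (f x) (f y) = e1 x y.

(* Let S be a maximum independent set.  Since S is independent, G is a spanning
   subgraph of the complete split graph on S (S independent, all other pairs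
   adjacent), which is isomorphic to complement(K_beta) \/ K_(n-beta) and whose ABC
   index is exactly the bound.  So it suffices that adding an edge uv between two
   vertices of positive degree strictly increases ABC; connectedness excludes
   isolated vertices.  When u gains a neighbour, each of its d_u old edges loses
   less than 1/(2 d_u sqrt(d_u + 1)), hence less than 1/(2 sqrt(d_u + 1)) in total,
   and likewise at v, whereas the new edge alone weighs at least
   1/(2 sqrt(d_u + 1)) + 1/(2 sqrt(d_v + 1)). *)

From mathcomp Require Import all_boot all_order all_algebra.
From mathcomp Require Import reals.
From mathcomp Require Import ring lra.

Set Implicit Arguments.
Unset Strict Implicit.
Unset Printing Implicit Defensive.

Import Order.TTheory GRing.Theory Num.Theory.
Local Open Scope ring_scope.

Section AbcWeight.
Variable R : rcfType.
Implicit Types a b x y : R.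

Definition abc_weight a b := Num.sqrt ((a + b - 2) / (a * b)).

Definition succ_loss x := (2 * x * Num.sqrt (x + 1))^-1.

Lemma abc_weightC a b : abc_weight a b = abc_weight b a.
Proof. by rewrite /abc_weight (addrC a) (mulrC a). Qed.

Lemma abc_weight_succl x y : 1 <= x -> 1 <= y ->
  abc_weight x y - succ_loss x < abc_weight (x + 1) y.
Proof.
move=> x_ge1 y_ge1.
set s := abc_weight (x + 1) y; set r := Num.sqrt (x + 1); set c := succ_loss x.
have r_gt0 : 0 < r by rewrite sqrtr_gt0; lra.
have r2 : r ^+ 2 = x + 1 by rewrite sqr_sqrtr //; lra.
have s2 : s ^+ 2 = (x + y - 1) / ((x + 1) * y).
  rewrite sqr_sqrtr; first by congr (_ / _); ring.
  by apply: divr_ge0; [lra | apply: mulr_ge0; lra].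
have s_ge0 : 0 <= s := sqrtr_ge0 _.
have c_gt0 : 0 < c by rewrite invr_gt0 !mulr_gt0 //; lra.
have sr_ge1 : 1 <= s * r.
  have : 1 <= (s * r) ^+ 2.
    have -> : (s * r) ^+ 2 = (x + y - 1) / y.
      by rewrite exprMn s2 r2; field; apply/andP; split; apply: lt0r_neq0; lra.
    by rewrite ler_pdivlMr; lra.
  have : 0 <= s * r by rewrite mulr_ge0 // ltW.
  nra.
have cE : c * (2 * x * r) = 1 by rewrite mulVf //; apply: lt0r_neq0; rewrite !mulr_gt0 //; lra.
have gap : (x + y - 2) / (x * y) - s ^+ 2 < 2 * s * c.
  rewrite s2.
  have -> : (x + y - 2) / (x * y) - (x + y - 1) / ((x + 1) * y) = (y - 2) / y / (x * (x + 1)).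
    field; apply/and3P; split; apply: lt0r_neq0; lra.
  have xx : 0 < x * (x + 1) by apply: mulr_gt0; lra.
  have -> : 2 * s * c = (s * r) * (c * (2 * x * r)) / (x * (x + 1)).
    rewrite -r2; field; apply/andP; split; apply: lt0r_neq0; lra.
  rewrite cE mulr1 ltr_pM2r ?invr_gt0 //.
  apply: lt_le_trans sr_ge1; rewrite ltr_pdivrMr; lra.
have cs_gt0 : 0 < c + s by lra.
rewrite ltrBlDl -[c + s]gtr0_norm // -sqrtr_sqr ltr_sqrt ?exprn_gt0 // sqrrD; nra.
Qed.

Lemma mul_succ_loss x : 0 < x -> x * succ_loss x = (2 * Num.sqrt (x + 1))^-1.
Proof.
move=> x_gt0; have : 0 < Num.sqrt (x + 1) by rewrite sqrtr_gt0; lra.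
by move=> r_gt0; rewrite /succ_loss; field; apply/andP; split; apply: lt0r_neq0; lra.
Qed.

Lemma abc_weight_ge a b : 2 <= a -> 2 <= b ->
  (2 * Num.sqrt a)^-1 + (2 * Num.sqrt b)^-1 <= abc_weight a b.
Proof.
move=> a_ge2 b_ge2.
set p := Num.sqrt a; set q := Num.sqrt b.
have p_gt0 : 0 < p by rewrite sqrtr_gt0; lra.
have q_gt0 : 0 < q by rewrite sqrtr_gt0; lra.
have p2 : p ^+ 2 = a by rewrite sqr_sqrtr //; lra.
have q2 : q ^+ 2 = b by rewrite sqr_sqrtr //; lra.
have lhs_ge0 : 0 <= (2 * p)^-1 + (2 * q)^-1 by rewrite addr_ge0 // invr_ge0; lra.
rewrite -[_ + _]ger0_norm // -sqrtr_sqr ler_sqrt; last first.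
  by apply: divr_ge0; [lra | apply: mulr_ge0; lra].
have -> : ((2 * p)^-1 + (2 * q)^-1) ^+ 2 = (p + q) ^+ 2 / 4 / (a * b).
  rewrite -p2 -q2; field; apply/andP; split; apply: lt0r_neq0; lra.
rewrite ler_pM2r ?invr_gt0 ?mulr_gt0 //; try lra.
rewrite ler_pdivrMr; last lra.
have : 2 * (p * q) <= a + b by rewrite -p2 -q2; have := sqr_ge0 (p - q); rewrite sqrrB; lra.
rewrite sqrrD p2 q2; lra.
Qed.

End AbcWeight.

Lemma deg_gt0 (T : finType) (e : rel T) x y : e x y -> (0 < deg e x)%N.
Proof. by move=> exy; apply/card_gt0P; exists y; rewrite inE. Qed.

Section ABCIndex.
Variable R : realType.

Lemma ABC_iso (T1 T2 : finType) (e1 : rel T1) (e2 : rel T2) :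
  graph_iso e1 e2 -> ABC R e1 = ABC R e2.
Proof.
move=> [f [f_bij f_hom]]; have f_inj := bij_inj f_bij.
have deg_f x : deg e2 (f x) = deg e1 x.
  rewrite /deg -(card_imset _ f_inj); apply: eq_card => z.
  have [g fK gK] := f_bij; rewrite inE -[z]gK f_hom (mem_imset _ _ f_inj) inE.
  by [].
rewrite /ABC (reindex f (onW_bij _ f_bij)); congr (_ * _); apply: eq_bigr => x _.
by rewrite (reindex f (onW_bij _ f_bij)); apply: eq_big => [y|y _]; rewrite ?f_hom ?deg_f.
Qed.

Lemma eq_ABC (T : finType) (e e' : rel T) : e =2 e' -> ABC R e = ABC R e'.
Proof. by move=> ee'; apply: ABC_iso; exists id; split=> //; exists id. Qed.

Variable T : finType.
Implicit Types (e : rel T) (x y : T).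

Definition edge_weight e (p : T * T) : R := abc_weight (deg e p.1)%:R (deg e p.2)%:R.

Lemma ABC_pairE e : ABC R e = 2^-1 * \sum_(p | e p.1 p.2) edge_weight e p.
Proof. by rewrite /ABC pair_big_dep. Qed.

Lemma sumr_nbr_const e x (a : R) : \sum_(y | e x y) a = a *+ deg e x.
Proof. by rewrite -sumr_const; apply: eq_bigl => y; rewrite inE. Qed.

Lemma sum_edge_ends e (c : T -> R) : symmetric e ->
  \sum_(p | e p.1 p.2) (c p.1 + c p.2) = 2 * \sum_x (deg e x)%:R * c x.
Proof.
move=> e_sym; rewrite big_split /=.
have swap_ends : \sum_(p | e p.1 p.2) c p.2 = \sum_(p | e p.1 p.2) c p.1.
  rewrite (reindex_inj (h := fun p : T * T => (p.2, p.1))) /=; last by move=> [? ?] [? ?] [-> ->].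
  by apply: eq_bigl => p; rewrite e_sym.
rewrite swap_ends -mulr2n mulr_natl -(pair_big_dep xpredT (fun x y => e x y) (fun x _ => c x)).
by congr (_ *+ 2); apply: eq_bigr => x _; rewrite sumr_nbr_const mulr_natl.
Qed.

End ABCIndex.

Arguments edge_weight {R T} e p.

Definition add_edge (T : finType) (e : rel T) (u v : T) : rel T :=
  fun x y => [|| e x y, (x == u) && (y == v) | (x == v) && (y == u)].

Section AddEdge.
Variables (R : realType) (T : finType) (e : rel T) (u v : T).
Hypotheses (e_simple : simple_graph e) (neq_uv : u != v) (nedge_uv : ~~ e u v).
Implicit Types x y : T.

Let endpoint x := (x == u) || (x == v).
Let loss x : R := if endpoint x then succ_loss (deg e x)%:R else 0.

Let nedge_vu : ~~ e v u.
Proof. by rewrite e_simple.1. Qed.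

Lemma add_edge_simple : simple_graph (add_edge e u v).
Proof.
have [e_sym e_irr] := e_simple; split=> [x y | x].
  by rewrite /add_edge e_sym (andbC (y == u)) (andbC (y == v)) (orbC ((x == v) && _)).
rewrite /add_edge e_irr /=; apply/negP => /orP [] /andP [/eqP -> /eqP uv];
  by move: neq_uv; rewrite uv eqxx.
Qed.

Lemma deg_add_edge x : deg (add_edge e u v) x = (deg e x + endpoint x)%N.
Proof.
rewrite /deg /endpoint /add_edge.
have [->|neq_xu] := eqVneq x u; last have [->|neq_xv] := eqVneq x v.
- transitivity #|v |: [set y | e u y]|; last by rewrite cardsU1 inE nedge_uv addn1.
  by apply: eq_card => y; rewrite !inE (negbTE neq_uv) orbF orbC.
- transitivity #|u |: [set y | e v y]|; last by rewrite cardsU1 inE nedge_vu addn1.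
  by apply: eq_card => y; rewrite !inE /= orbC.
by rewrite addn0; apply: eq_card => y; rewrite !inE /= !orbF.
Qed.

Lemma big_add_edge (F : T * T -> R) :
  \sum_(p | add_edge e u v p.1 p.2) F p = \sum_(p | e p.1 p.2) F p + F (u, v) + F (v, u).
Proof.
rewrite (bigID (fun p => e p.1 p.2)) /= -addrA; congr (_ + _).
  by apply: eq_bigl => -[x y] /=; rewrite /add_edge; case: (e x y); rewrite ?andbF.
rewrite (bigD1 (u, v)) /=; last by rewrite /add_edge !eqxx nedge_uv orbT.
rewrite (big_pred1 (v, u)) // => -[x y]; rewrite /= /add_edge.
case: (boolP (e x y)) => [exy | _] /=; rewrite xpair_eqE.
  by apply/esym/negP => /andP [/eqP xv /eqP yu]; move: exy; rewrite xv yu (negbTE nedge_vu).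
by case: (eqVneq x u) => [->|]; case: (eqVneq y v) => [->|];
  rewrite /= ?xpair_eqE ?(negbTE neq_uv) ?andbF ?orbF ?andbT.
Qed.

Lemma edge_endpoint x y : e x y -> endpoint x -> ~~ endpoint y.
Proof.
have [_ e_irr] := e_simple; move=> exy /orP [] /eqP xE; rewrite /endpoint;
  apply/negP => /orP [] /eqP yE; move: exy;
  by rewrite xE yE ?e_irr ?(negbTE nedge_uv) ?(negbTE nedge_vu).
Qed.

Lemma edge_weight_add_edge_lt x y : e x y -> endpoint x ->
  edge_weight e (x, y) - (loss x + loss y) < edge_weight (add_edge e u v) (x, y).
Proof.
move=> exy x_end; have y_end := edge_endpoint exy x_end.
rewrite /loss x_end (negbTE y_end) addr0 /edge_weight /= !deg_add_edge x_end.
rewrite (negbTE y_end) addn0 natrD.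
apply: abc_weight_succl; rewrite ler1n; first exact: deg_gt0 exy.
by apply: (deg_gt0 (y := x)); rewrite e_simple.1.
Qed.

Lemma edge_weight_add_edge_ge x y : e x y ->
  edge_weight e (x, y) - (loss x + loss y) <= edge_weight (add_edge e u v) (x, y).
Proof.
move=> exy; case x_end: (endpoint x); first exact/ltW/edge_weight_add_edge_lt.
case y_end: (endpoint y).
  have eyx : e y x by rewrite e_simple.1.
  rewrite /edge_weight /= abc_weightC [X in _ <= X]abc_weightC (addrC (loss x)).
  exact/ltW/(edge_weight_add_edge_lt eyx y_end).
by rewrite /loss x_end y_end /edge_weight !deg_add_edge x_end y_end !addn0 addr0 subr0.
Qed.

Lemma ABC_add_edge : (0 < deg e u)%N -> (0 < deg e v)%N ->
  ABC R e < ABC R (add_edge e u v).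
Proof.
move=> du_gt0 dv_gt0; have [e_sym _] := e_simple.
set du : R := (deg e u)%:R; set dv : R := (deg e v)%:R.
have du_ge1 : 1 <= du by rewrite ler1n.
have dv_ge1 : 1 <= dv by rewrite ler1n.
have new_edge : edge_weight (add_edge e u v) (u, v) + edge_weight (add_edge e u v) (v, u)
    = 2 * abc_weight (du + 1) (dv + 1).
  rewrite /edge_weight /= !deg_add_edge /endpoint !eqxx orbT !natrD -/du -/dv.
  by rewrite (abc_weightC (dv + 1)); lra.
have total_loss : \sum_x (deg e x)%:R * loss x
    = (2 * Num.sqrt (du + 1))^-1 + (2 * Num.sqrt (dv + 1))^-1.
  rewrite (bigD1 u) // (bigD1 v) /= ?(eq_sym v) // big1 => [|x /andP [neq_xv neq_xu]].
    by rewrite /loss /endpoint !eqxx orbT !mul_succ_loss ?addr0 //; lra.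
  by rewrite /loss /endpoint (negbTE neq_xu) (negbTE neq_xv) mulr0.
have [w euw] : exists w, e u w by move/card_gt0P: du_gt0 => [w]; rewrite inE; exists w.
have lt_weights : \sum_(p | e p.1 p.2) (edge_weight e p - (loss p.1 + loss p.2))
    < \sum_(p | e p.1 p.2) edge_weight (add_edge e u v) p.
  rewrite (bigD1 (u, w)) //= [ltRHS](bigD1 (u, w)) //=.
  apply: ltr_leD; first by apply: (edge_weight_add_edge_lt euw); rewrite /endpoint eqxx.
  by apply: ler_sum => -[x y] /andP [exy _]; apply: edge_weight_add_edge_ge.
have gain : (2 * Num.sqrt (du + 1))^-1 + (2 * Num.sqrt (dv + 1))^-1
    <= abc_weight (du + 1) (dv + 1) by apply: abc_weight_ge; lra.
rewrite !ABC_pairE big_add_edge ltr_pM2l ?invr_gt0 ?ltr0n //.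
move: lt_weights; rewrite sumrB sum_edge_ends // total_loss -addrA new_edge; lra.
Qed.

End AddEdge.

Section Supergraph.
Variables (R : realType) (T : finType).
Implicit Types e : rel T.

Definition missing_edges e e' := [set p : T * T | e' p.1 p.2 && ~~ e p.1 p.2].

Lemma subrel_eqVmissing e e' : subrel e e' ->
  e =2 e' \/ exists x y, e' x y && ~~ e x y.
Proof.
move=> sub_ee'; case: (pickP [pred p : T * T | e' p.1 p.2 && ~~ e p.1 p.2]).
  by move=> [x y] missing_xy; right; exists x, y.
move=> none; left=> x y; apply/idP/idP => [/sub_ee' // | e'xy].
by move: (none (x, y)); rewrite /= e'xy => /negbFE.
Qed.

Lemma ABC_lt_subrel e e' x y :
  simple_graph e -> simple_graph e' -> subrel e e' ->
  (forall a b, e' a b -> (0 < deg e a)%N) ->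
  e' x y -> ~~ e x y -> ABC R e < ABC R e'.
Proof.
move=> + e'_simple; have [n] := ubnP #|missing_edges e e'|.
elim: n e x y => // n IHn e x y; rewrite ltnS => card_missing e_simple sub_ee' e'_deg e'xy nexy.
have neq_xy : x != y by apply: contraTneq e'xy => ->; rewrite e'_simple.2.
have e'yx : e' y x by rewrite e'_simple.1.
have lt_add := ABC_add_edge R e_simple neq_xy nexy (e'_deg _ _ e'xy) (e'_deg _ _ e'yx).
have sub_add : subrel (add_edge e x y) e'.
  move=> a b /orP [/sub_ee' // | /orP [] /andP [/eqP -> /eqP ->] //].
case: (subrel_eqVmissing sub_add) => [eq_add | [a [b /andP [e'ab nab]]]].
  by rewrite -(eq_ABC R eq_add).
apply: (lt_trans lt_add); apply: (IHn _ a b) => //.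
- apply: leq_trans card_missing; apply: proper_card; apply/properP; split.
    apply/subsetP => -[a' b']; rewrite !inE /= /add_edge => /andP [-> ].
    by rewrite !negb_or => /andP [].
  by exists (x, y); rewrite !inE /= /add_edge ?e'xy ?nexy /= ?eqxx ?orbT ?andbF.
- exact: add_edge_simple.
- by move=> a' b' /e'_deg; rewrite deg_add_edge // addn_gt0 => ->.
Qed.

Lemma ABC_subrel e e' :
  simple_graph e -> simple_graph e' -> subrel e e' ->
  (forall a b, e' a b -> (0 < deg e a)%N) ->
  ABC R e <= ABC R e' /\ (ABC R e = ABC R e' -> e =2 e').
Proof.
move=> e_simple e'_simple sub_ee' e'_deg.
case: (subrel_eqVmissing sub_ee') => [ee' | [x [y /andP [e'xy nexy]]]].
  by rewrite (eq_ABC R ee').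
have lt_ee' := ABC_lt_subrel e_simple e'_simple sub_ee' e'_deg e'xy nexy.
by split=> [|eq_ee']; [exact: ltW | move: lt_ee'; rewrite eq_ee' ltxx].
Qed.

End Supergraph.

Section CompleteSplit.
Variables (R : realType) (T : finType) (S : {set T}).

Definition complete_split : rel T := fun x y => (x != y) && ~~ ((x \in S) && (y \in S)).

Lemma complete_split_simple : simple_graph complete_split.
Proof.
split=> [x y | x]; rewrite /complete_split; last by rewrite eqxx.
by rewrite eq_sym (andbC (y \in S)).
Qed.

Lemma deg_complete_split x :
  deg complete_split x = if x \in S then #|~: S| else #|T|.-1.
Proof.
rewrite /deg /complete_split; case: ifP => xS.
  apply: eq_card => y; rewrite !inE /=.
  by case: (eqVneq x y) => [<-|]; rewrite ?xS.
by rewrite -(cardsC1 x); apply: eq_card => y; rewrite !inE /= andbT eq_sym.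
Qed.

Lemma ABC_complete_split : (0 < #|T|)%N ->
  let n : R := #|T|%:R in let b : R := #|S|%:R in
  ABC R complete_split =
    b * (n - b) * Num.sqrt ((2 * n - b - 3) / ((n - b) * (n - 1)))
    + (n - b) * (n - b - 1) / 2 * Num.sqrt ((2 * n - 4) / ((n - 1) * (n - 1))).
Proof.
move=> T_gt0 n b.
set k := #|~: S|; set m := #|T|.-1.
pose w (x y : T) : R := abc_weight (deg complete_split x)%:R (deg complete_split y)%:R.
have row_in x : x \in S ->
    \sum_(y | complete_split x y) w x y = abc_weight k%:R m%:R *+ k.
  move=> xS; rewrite -sumr_const; apply: eq_big => y.
    rewrite /complete_split xS !inE /=.
    by case: (eqVneq x y) => [<-|]; rewrite ?xS.
  by rewrite /complete_split xS /= => /andP [_ yS]; rewrite /w !deg_complete_split xS (negbTE yS).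
have row_out x : x \notin S ->
    \sum_(y | complete_split x y) w x y
      = abc_weight m%:R k%:R *+ #|S| + abc_weight m%:R m%:R *+ k.-1.
  move=> xS; rewrite (bigID (mem S)) /=; congr (_ + _).
    rewrite -sumr_const; apply: eq_big => y.
      rewrite /complete_split (negbTE xS) andbT.
      by case: (eqVneq x y) => [<-|]; rewrite ?(negbTE xS).
    by move=> /andP [_ yS]; rewrite /w !deg_complete_split yS (negbTE xS).
  rewrite /k (cardsD1 x) inE xS add1n /= -sumr_const; apply: eq_big => y.
    by rewrite /complete_split (negbTE xS) !inE andbT eq_sym.
  by move=> /andP [_ yS]; rewrite /w !deg_complete_split (negbTE yS) (negbTE xS).
rewrite /ABC -/w (bigID (mem S)) /= (eq_bigr _ row_in) (eq_bigr _ row_out) !sumr_const.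
have -> : #|(fun x => x \notin S)| = k by apply: eq_card => x; rewrite inE.
have kE : k%:R = n - b by rewrite /n /b -(cardsC S) natrD -/k; ring.
have mE : m%:R = n - 1 by rewrite /n /m -{2}(prednK T_gt0) -natr1; ring.
have kk : (k.-1)%:R * k%:R = (k%:R - 1) * k%:R :> R.
  by case: (k) => [|j]; rewrite ?mulr0 // -natr1 addrK.
have F1 : abc_weight k%:R m%:R = Num.sqrt ((2 * n - b - 3) / ((n - b) * (n - 1))).
  by rewrite /abc_weight kE mE; congr (Num.sqrt (_ / _)); ring.
have F2 : abc_weight m%:R m%:R = Num.sqrt ((2 * n - 4) / ((n - 1) * (n - 1))).
  by rewrite /abc_weight mE; congr (Num.sqrt (_ / _)); ring.
rewrite (abc_weightC m%:R) F1 F2 mulrnDl -!mulrnA -!(mulr_natr (Num.sqrt _)) !natrM kk kE -/b.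
by set X := Num.sqrt _; set Y := Num.sqrt _; field.
Qed.

Lemma complete_split_iso :
  graph_iso complete_split (join_empty_complete #|T| #|S|).
Proof.
pose s := enum S ++ enum (~: S).
have size_s : size s = #|T| by rewrite size_cat -!cardE cardsC.
have s_all x : x \in s by rewrite mem_cat !mem_enum inE; case: (x \in S).
have index_lt x : (index x s < #|T|)%N by rewrite -size_s index_mem.
pose f x := Ordinal (index_lt x).
have f_inj : injective f.
  by move=> x y /(congr1 val) /= eq_xy; rewrite -(nth_index x (s_all x)) eq_xy nth_index.
have f_S x : (f x < #|S|)%N = (x \in S).
  rewrite /= index_cat mem_enum cardE; case: ifP => xS; first by rewrite index_mem mem_enum.
  by rewrite ltnNge leq_addr.
exists f; split; first by apply: inj_card_bij f_inj _; rewrite card_ord.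
by move=> x y; rewrite /join_empty_complete /complete_split (inj_eq f_inj) !f_S.
Qed.

End CompleteSplit.

Lemma indep_numP (T : finType) (e : rel T) :
  exists2 S : {set T}, independent e S & #|S| = indep_num e.
Proof.
have [|S S_ind S_max] := @eq_bigmax_cond _ (fun S : {set T} => independent e S) (fun S => #|S|).
  by apply/card_gt0P; exists set0; apply/forall_inP => x; rewrite inE.
by exists S; rewrite // -S_max.
Qed.

Lemma independent_subrel (T : finType) (e : rel T) (S : {set T}) :
  irreflexive e -> independent e S -> subrel e (complete_split S).
Proof.
move=> e_irr S_ind x y exy; apply/andP; split; first by apply: contraTneq exy => ->; rewrite e_irr.
apply/andP => -[xS yS]; move/forall_inP: S_ind => /(_ x xS) /forall_inP /(_ y yS).
by rewrite exy.
Qed.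

Lemma connected_deg_gt0 (T : finType) (e : rel T) x y :
  connected_graph e -> x != y -> (0 < deg e x)%N.
Proof.
move=> e_conn; have /connectP [[|z p] /= path_p ->] := e_conn x y; first by rewrite eqxx.
by case/andP: path_p => exz _ _; exact: deg_gt0 exz.
Qed.

Theorem theorem2p2 (R : realType) (T : finType) (e : rel T) :
  simple_graph e -> connected_graph e -> (0 < #|T|)%N ->
  let n : R := (#|T|)%:R in
  let b : R := (indep_num e)%:R in
  let bound : R :=
    b * (n - b) * Num.sqrt ((2 * n - b - 3) / ((n - b) * (n - 1)))
    + (n - b) * (n - b - 1) / 2 * Num.sqrt ((2 * n - 4) / ((n - 1) * (n - 1))) in
  ABC R e <= bound /\
  (ABC R e = bound <->
   graph_iso e (join_empty_complete #|T| (indep_num e))).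
Proof.
move=> e_simple e_conn T_gt0 n b bound.
have [S S_ind S_card] := indep_numP e.
have ABC_split : ABC R (complete_split S) = bound.
  by rewrite /bound /b -S_card; exact: ABC_complete_split.
have [f [f_bij f_hom]] : graph_iso (complete_split S) (join_empty_complete #|T| (indep_num e)).
  by rewrite -S_card; exact: complete_split_iso.
have split_deg x y : complete_split S x y -> (0 < deg e x)%N.
  by case/andP=> neq_xy _; exact: connected_deg_gt0 e_conn neq_xy.
have [le_split eq_split] := ABC_subrel R e_simple (complete_split_simple S)
  (independent_subrel e_simple.2 S_ind) split_deg.
split; first by rewrite -ABC_split.
split=> [ABC_e | /(ABC_iso R) ->].
  by exists f; split=> // x y; rewrite f_hom (eq_split _) // ABC_split.
by rewrite -ABC_split; apply/esym/(ABC_iso R); exists f.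
Qed.
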